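(* Let $\mathcal G=((V,E),(V_1,V_2,V_\Diamond),\delta,w)$ be a stochastic game and let $\mathsf r$ be a real vector indexed by $V$ that satisfies the Bellman condition, with classes $C_1,\dots,C_k$. Then for every $1\le i\le k$, $\mathcal G_{C_i}$ is a stochastic game, i.e., every vertex of $\mathcal G_{C_i}$ has at least one out-neighbour in $\mathcal G_{C_i}$ and for every probabilistic vertex of $\mathcal G_{C_i}$ the probabilities of its out-edges in $\mathcal G_{C_i}$ sum to $1$.
   Context: A stochastic game is $\mathcal{G}=((V,E),(V_1,V_2,V_\Diamond),\delta,w)$: a finite directed graph $(V,E)$ in which every vertex $v$ has a nonempty out-neighbour set $E(v)$, a partition of $V$ into Player 1, Player 2 and probabilistic vertices, a function $\delta$ giving each $v\in V_\Diamond$ a probability distribution $\delta(v)$ on $E(v)$, positive on every out-neighbour, and payoffs $w:E\to\mathbb{Q}$. For a real vector $\mathsf r=(r_v)_{v\in V}$, its classes $C_1,\dots,C_k$ are the maximal nonempty sets of vertices on which $\mathsf r$ is constant. A vertex $v\in C_i$ is a boundary vertex if $v\in V_\Diamond$ and $E(v)\not\subseteq C_i$; $\mathrm{Bnd}_i$ is the set of boundary vertices of $C_i$. $\mathcal G_{C_i}$ is obtained by restricting $\mathcal G$ to the vertices of $C_i$ (keeping the edges of $\mathcal G$ between vertices of $C_i$, ownership, probabilities and payoffs) and changing every vertex of $\mathrm{Bnd}_i$ into an absorbing vertex whose only out-edge is a self-loop (probability 1, payoff 0). $\mathsf r$ satisfies the Bellman condition if for every $v$: $r_v=\max_{v'\in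 E(v)}r_{v'}$ if $v\in V_1$, $r_v=\min_{v'\in E(v)}r_{v'}$ if $v\in V_2$, $r_v=\sum_{v'\in E(v)}\delta(v)(v')r_{v'}$ if $v\in V_\Diamond$. *)

From mathcomp Require Import all_boot all_order all_algebra.
Set Implicit Arguments. Unset Strict Implicit. Unset Printing Implicit Defensive.
Import Order.TTheory GRing.Theory Num.Theory.
Local Open Scope ring_scope.

Inductive player := P1 | P2 | PR.

Definition is_prob (p : player) : bool := if p is PR then true else false.

(* A game structure on a finite vertex type V: edge relation E, ownership,
   transition probabilities delta (only meaningful on edges out of
   probabilistic vertices) and payoffs w (on edges). *)
Record game (V : finType) := Game {
  edge : rel V;
  owner : V -> player;
  prob : V -> V -> rat;
  payoff : V -> V -> rat }.

Definition is_stochastic_game (V : finType) (G : game V) : Prop :=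
  (forall v, exists u, edge G v u) /\
  (forall v, owner G v = PR ->
     (forall u, edge G v u -> 0 < prob G v u) /\
     \sum_(u | edge G v u) prob G v u = 1).

Definition bellman (V : finType) (G : game V) (R : realFieldType) (r : V -> R)
  : Prop :=
  forall v,
  match owner G v with
  | P1 => (exists2 u, edge G v u & r v = r u) /\
          (forall u, edge G v u -> r u <= r v)
  | P2 => (exists2 u, edge G v u & r v = r u) /\
          (forall u, edge G v u -> r v <= r u)
  | PR => r v = \sum_(u | edge G v u) ratr (prob G v u) * r u
  end.

(* The class of r containing v0 (classes are exactly these sets). *)
Definition rclass (V : finType) (R : realFieldType) (r : V -> R) (v0 : V)
  : {set V} := [set u | r u == r v0].

Definition boundary (V : finType) (G : game V) (C : {set V}) (v : V) : bool :=
  is_prob (owner G v) && [exists u, edge G v u && (u \notin C)].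

Definition restrict (V : finType) (G : game V) (C : {set V})
  : game {v : V | v \in C} :=
  {| edge := fun x y => if boundary G C (val x) then x == y
                        else edge G (val x) (val y);
     owner := fun x => owner G (val x);
     prob := fun x y => if boundary G C (val x) then (x == y)%:R
                        else prob G (val x) (val y);
     payoff := fun x y => if boundary G C (val x) then 0
                          else payoff G (val x) (val y) |}.

From mathcomp Require Import all_boot all_order all_algebra.
Set Implicit Arguments. Unset Strict Implicit. Unset Printing Implicit Defensive.
Import Order.TTheory GRing.Theory Num.Theory.
Local Open Scope ring_scope.

(* Restricting to any vertex set C keeps the distributions sound: a boundary
   vertex gets the Dirac self-loop, and a probabilistic vertex that is not on
   the boundary has all its successors in C, so it keeps its whole
   distribution.  The only thing that can fail is the existence of successors
   of Player 1 / Player 2 vertices; for a class of a Bellman vector the edge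
   realising the max (resp. min) stays in the class. *)

Section Restriction.

Variables (V : finType) (G : game V) (C : {set V}).

Lemma edge_notin_boundary (v u : V) :
  is_prob (owner G v) -> ~~ boundary G C v -> edge G v u -> u \in C.
Proof.
move=> probv nbv vu; apply: contraNT nbv => uNC.
by rewrite /boundary probv; apply/existsP; exists u; rewrite vu.
Qed.

Lemma restrict_has_succ :
  (forall v, exists u, edge G v u) ->
  (forall v, v \in C -> ~~ is_prob (owner G v) ->
     exists2 u, edge G v u & u \in C) ->
  forall x, exists y, edge (restrict G C) x y.
Proof.
move=> succG succC [v vC] /=.
have [bv | nbv] := boolP (boundary G C v); first by exists (Sub v vC).
have [u vu uC] : exists2 u, edge G v u & u \in C.
  have [probv | /(succC v vC) //] := boolP (is_prob (owner G v)).
  have [u vu] := succG v.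
  by exists u; rewrite // (edge_notin_boundary probv nbv).
by exists (Sub u uC).
Qed.

Lemma restrict_distribution :
  (forall v, owner G v = PR ->
     (forall u, edge G v u -> 0 < prob G v u) /\
     \sum_(u | edge G v u) prob G v u = 1) ->
  forall x, owner (restrict G C) x = PR ->
    (forall y, edge (restrict G C) x y -> 0 < prob (restrict G C) x y) /\
    \sum_(y | edge (restrict G C) x y) prob (restrict G C) x y = 1.
Proof.
move=> distrG [v vC] /= ownv.
have [bv | nbv] := boolP (boundary G C v).
  split=> [y /eqP <- | ]; first by rewrite eqxx ltr01.
  by rewrite (big_pred1 (Sub v vC)) ?eqxx.
have [probv_gt0 probv_sum1] := distrG v ownv.
split=> [y | ]; first exact: probv_gt0.
rewrite -probv_sum1 -(big_sub_cond C (edge G v) (prob G v)).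
apply: eq_bigl => u; apply: andb_idl => vu.
by apply: edge_notin_boundary nbv vu; rewrite ownv.
Qed.

Lemma restrict_stochastic :
  is_stochastic_game G ->
  (forall v, v \in C -> ~~ is_prob (owner G v) ->
     exists2 u, edge G v u & u \in C) ->
  is_stochastic_game (restrict G C).
Proof.
move=> [succG distrG] succC.
by split; [apply: restrict_has_succ | apply: restrict_distribution].
Qed.

End Restriction.

Lemma bellman_succ_same_value (V : finType) (G : game V) (R : realFieldType)
    (r : V -> R) (v : V) :
  bellman G r -> ~~ is_prob (owner G v) -> exists2 u, edge G v u & r u = r v.
Proof.
by move=> /(_ v); case: (owner G v) => // -[[u vu ruv] _] _; exists u.
Qed.

Theorem proposition3 (V : finType) (G : game V) (R : realFieldType)
  (r : V -> R) :
  is_stochastic_game G -> bellman G r ->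
  forall v0 : V, is_stochastic_game (restrict G (rclass r v0)).
Proof.
move=> stochG bellr v0; apply: restrict_stochastic => // v.
rewrite inE => /eqP rv /(bellman_succ_same_value bellr) [u vu ruv].
by exists u; rewrite // inE ruv rv.
Qed.
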